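(* Let $(X,d)$ be a separable metric space with a computable structure $\mathcal I$ and let $T:X\to X$ be any map. If $I,J\in\mathcal I$, then $\mathcal E^I(x)=\mathcal E^J(x)$ for every $x\in X$.
   Context: $\Sigma=\{0,1\}^*$, $|s|$ the length of $s$; a universal Turing machine $\mathcal U$ is fixed and viewed as a partial recursive function $\Sigma\to\Sigma$. An interpretation function is $I:\Sigma\to X$ with dense image; it is computable if there is a total recursive $D:\Sigma\times\Sigma\times\mathbb N\to\mathbb Q$ with $|d(I(s_1),I(s_2))-D(s_1,s_2,n)|\le2^{-n}$; computable $I_1,I_2$ are equivalent if there is a total recursive $D^*$ with $|d(I_1(s_1),I_2(s_2))-D^*(s_1,s_2,n)|\le2^{-n}$; a computable structure is an equivalence class. Fix a total recursive surjection $\mathcal Q:\Sigma\to\Sigma^*$ onto the set $\Sigma^*$ of finite sequences of strings. For a program $p$ with $\mathcal U(p)$ defined, $U(p)=I(\mathcal Q(\mathcal U(p)))\in X^*$ ($I$ applied componentwise), with $i$-th entry $U_i(p)$, indexed from $0$. For $x\in X$, $n\in\mathbb N$, $\epsilon>0$: $\mathcal E^I(x,n,\epsilon)=\min\{|p|: U(p)\in X^{n+1},\ \max_{0\le i\le n}d(U_i(p),T^i(x))<\epsilon\}$. Hyperreals: $\mathbb R^*$ is an ordered field containing $\mathbb R$ with a surjective ring homomorphism $J:\mathbb R^{\mathbb N}\to\mathbb R^*$ such that if $a\in\mathbb R$ and $\exists k\ge1$ with $\phi_{kn}\ge a$ for all $n\ge1$ then $J(\phi)\ge a$; for nonzero $a,b$,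 $a\simeq b$ iff $a/b$, $b/a$ are bounded (absolutely less than some natural number); $[a]$ the class; $[a]\le[b]$ iff for all $x\in[a],y\in[b]$, $x\simeq y$ or $x<y$. $\mathcal R$ is the totally ordered set of $\approx$-classes of monotone sequences in $\mathbb R^*/{\simeq}$, where $(a_i)<(b_j)$ iff $\exists M$ with $a_n<b_m$ for all $n,m>M$ and $\approx$ means neither $<$ holds; $\mathbb R^*/{\simeq}$ embeds as constant sequences, and monotone sequences in $\mathcal R$ have sups and infs in $\mathcal R$. $\mathcal E^I(x,\epsilon)=[J((\mathcal E^I(x,n,\epsilon))_n)]$ (nonincreasing in $\epsilon$) and $\mathcal E^I(x)=\sup_{\epsilon>0}\mathcal E^I(x,\epsilon)\in\mathcal R$ (equivalently the sup along $\epsilon=1/k$). *)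

From HB Require Import structures.
From mathcomp Require Import all_boot all_order all_algebra.
From mathcomp Require Import boolp reals.
Set Implicit Arguments.
Unset Strict Implicit.
Unset Printing Implicit Defensive.
Import Order.TTheory GRing.Theory Num.Theory.
Local Open Scope ring_scope.

Inductive PR : nat -> Type :=
| PRzero (n : nat) : PR n
| PRsucc : PR 1
| PRproj (n : nat) (i : 'I_n) : PR n
| PRcomp (n m : nat) : PR m -> PRs n m -> PR n
| PRrec (n : nat) : PR n -> PR n.+2 -> PR n.+1
| PRmu (n : nat) : PR n.+1 -> PR n
with PRs : nat -> nat -> Type :=
| PRnil (n : nat) : PRs n 0
| PRcons (n m : nat) : PR n -> PRs n m -> PRs n m.+1.

(* relational (big-step) semantics: [eval f v y] = "f(v) is defined and = y" *)
Inductive eval : forall n, PR n -> seq nat -> nat -> Prop :=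
| eval_zero n v : size v = n -> eval (PRzero n) v 0
| eval_succ x : eval PRsucc [:: x] x.+1
| eval_proj n (i : 'I_n) v : size v = n -> eval (PRproj i) v (nth 0%N v i)
| eval_comp n m (f : PR m) (gs : PRs n m) v w y :
    evals gs v w -> eval f w y -> eval (PRcomp f gs) v y
| eval_rec0 n (f : PR n) (g : PR n.+2) v y :
    eval f v y -> eval (PRrec f g) (0%N :: v) y
| eval_recS n (f : PR n) (g : PR n.+2) k v z y :
    eval (PRrec f g) (k :: v) z -> eval g (k :: z :: v) y ->
    eval (PRrec f g) (k.+1 :: v) y
| eval_mu n (f : PR n.+1) v k :
    eval f (k :: v) 0 ->
    (forall j, (j < k)%N -> exists z, (0 < z)%N /\ eval f (j :: v) z) ->
    eval (PRmu f) v k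
with evals : forall n m, PRs n m -> seq nat -> seq nat -> Prop :=
| evals_nil n v : size v = n -> evals (PRnil n) v [::]
| evals_cons n m (g : PR n) (gs : PRs n m) v y w :
    eval g v y -> evals gs v w -> evals (PRcons g gs) v (y :: w).

(* Sigma = {0,1}^* ; bijective base-2 coding of binary strings by nat *)
Fixpoint enc (s : seq bool) : nat :=
  match s with
  | [::] => 0%N
  | b :: s' => ((enc s').*2 + b).+1
  end.

Definition partial_rec (f : seq bool -> option (seq bool)) : Prop :=
  exists e : PR 1, forall p (y : nat),
    eval e [:: enc p] y <-> exists s, f p = Some s /\ y = enc s.

(* the fixed universal machine: partial recursive and universal in the
   (additively optimal) Kolmogorov sense *)
Definition universal (U : seq bool -> option (seq bool)) : Prop :=
  partial_rec U /\
  forall f, partial_rec f -> exists c : nat, forall s y, f s = Some y ->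
    exists p, U p = Some y /\ (size p <= size s + c)%N.

(* Q : Sigma -> Sigma^* total recursive surjection: length and entries
   are total recursive *)
Definition Q_ok (Q : seq bool -> seq (seq bool)) : Prop :=
  (exists e : PR 1, forall s, eval e [:: enc s] (size (Q s))) /\
  (exists e : PR 2, forall s i, eval e [:: enc s; i] (enc (nth [::] (Q s) i))) /\
  (forall t, exists s, Q s = t).

(* total recursive D : Sigma x Sigma x N -> Q (rationals coded by
   sign, numerator, denominator-1, each total recursive) *)
Definition total_rec_rat3 (D : seq bool -> seq bool -> nat -> rat) : Prop :=
  exists es en ed : PR 3, forall s1 s2 n, exists a b c : nat,
    let args := [:: enc s1; enc s2; n] in
    [/\ eval es args a, eval en args b, eval ed args c &
        D s1 s2 n = (-1) ^+ a * b%:R / c.+1%:R].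

Section Metric.
Variables (R : realType) (X : Type) (d : X -> X -> R).

Definition metric : Prop :=
  [/\ forall x y, 0 <= d x y,
      forall x y, d x y = 0 <-> x = y,
      forall x y, d x y = d y x &
      forall x y z, d x z <= d x y + d y z].

Definition separable : Prop :=
  exists c : nat -> X, forall x (e : R), 0 < e -> exists n, d (c n) x < e.

Definition dense_image (I : seq bool -> X) : Prop :=
  forall x (e : R), 0 < e -> exists s, d (I s) x < e.

Definition computable_interp (I : seq bool -> X) : Prop :=
  dense_image I /\
  exists D, total_rec_rat3 D /\ forall s1 s2 n,
    `|d (I s1) (I s2) - ratr (D s1 s2 n)| <= 2%:R ^- n.

Definition equiv_interp (I1 I2 : seq bool -> X) : Prop :=
  exists D, total_rec_rat3 D /\ forall s1 s2 n,
    `|d (I1 s1) (I2 s2) - ratr (D s1 s2 n)| <= 2%:R ^- n.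

(* a computable structure = an equivalence class of computable interpretations *)
Definition computable_structure (CS : (seq bool -> X) -> Prop) : Prop :=
  exists I0, computable_interp I0 /\
    forall I, CS I <-> (computable_interp I /\ equiv_interp I0 I).
End Metric.

Section Complexity.
Variables (R : realType) (X : Type) (d : X -> X -> R) (T : X -> X)
  (U : seq bool -> option (seq bool)) (Q : seq bool -> seq (seq bool))
  (I : seq bool -> X).

Definition good_prog (x : X) (n : nat) (eps : R) (p : seq bool) : Prop :=
  exists w, U p = Some w /\ size (Q w) = n.+1 /\
    forall i, (i <= n)%N -> d (I (nth [::] (Q w) i)) (iter i T x) < eps.

(* minimum length of such a program (0 by convention if there is none) *)
Definition Enet (x : X) (n : nat) (eps : R) : nat :=
  match pselect (exists m, `[< exists p, size p = m /\ good_prog x n eps p >])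
  with
  | left h => ex_minn h
  | right _ => 0%N
  end.
End Complexity.

Section Hyper.
Variables (R : realType) (Rs : realFieldType).

Definition hyperreals (iota : {rmorphism R -> Rs}) (J : (nat -> R) -> Rs) : Prop :=
  (forall a b, a <= b -> iota a <= iota b) /\
  [/\ forall f g, J (fun n => f n + g n) = J f + J g,
      forall f g, J (fun n => f n * g n) = J f * J g,
      J (fun _ => 1) = 1,
      forall y, exists f, J f = y &
      forall (a : R) f, (exists k, (0 < k)%N /\
           forall n, (0 < n)%N -> a <= f (k * n)%N) -> iota a <= J f].

Definition bounded (z : Rs) : Prop := exists N : nat, `|z| < N%:R.

Definition sim (a b : Rs) : Prop :=
  [/\ a != 0, b != 0, bounded (a / b) & bounded (b / a)].

Definition cls_le (a b : Rs) : Prop :=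
  forall x y, 0 < x -> 0 < y -> sim x a -> sim y b -> sim x y \/ x < y.

Definition cls_lt (a b : Rs) : Prop := cls_le a b /\ ~ sim a b.

(* monotone sequences in R*/~ (classes represented by positive elements) *)
Definition mono_seq (s : nat -> Rs) : Prop :=
  (forall n, 0 < s n) /\
  ((forall n, cls_le (s n) (s n.+1)) \/ (forall n, cls_le (s n.+1) (s n))).

Definition seq_lt (s t : nat -> Rs) : Prop :=
  exists M : nat, forall n m, (M < n)%N -> (M < m)%N -> cls_lt (s n) (t m).

Definition seq_approx (s t : nat -> Rs) : Prop := ~ seq_lt s t /\ ~ seq_lt t s.

(* order on the set calR of approx-classes of monotone sequences *)
Definition calR_le (s t : nat -> Rs) : Prop := seq_lt s t \/ seq_approx s t.

Definition is_sup_calR (P : R -> Prop) (F : R -> nat -> Rs) (s : nat -> Rs) : Prop :=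
  [/\ mono_seq s,
      forall i, P i -> calR_le (F i) s &
      forall t, mono_seq t -> (forall i, P i -> calR_le (F i) t) -> calR_le s t].
End Hyper.

(* E^I(x,eps) = [J((E^I(x,n,eps))_n)], embedded in calR as a constant sequence *)
Definition Ecls (R : realType) (Rs : realFieldType) (J : (nat -> R) -> Rs)
  (X : Type) (d : X -> X -> R) (T : X -> X) (U : seq bool -> option (seq bool))
  (Q : seq bool -> seq (seq bool)) (I : seq bool -> X) (x : X) (eps : R) : nat -> Rs :=
  fun _ => J (fun n => (Enet d T U Q I x n eps)%:R).

From HB Require Import structures.
From mathcomp Require Import all_boot all_order all_algebra.
From mathcomp Require Import boolp reals.
From Stdlib Require Import Program.Equality.
From mathcomp Require Import zify ring lra.
Import Order.TTheory GRing.Theory Num.Theory.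

(* Any two interpretations A, B of the structure are computably equivalent
   to its reference interpretation I0.  Deciding closeness up to 2^-k with the
   approximate distances, a program can search, for every string s, first a
   string t with I0(t) near A(s) and then a string s' with B(s') near I0(t).
   Mapping this search over the list output by the universal machine turns an
   eps/2-description of an orbit segment for A into an eps-description for B
   at an additive cost c independent of x and n.  Since the complexities are
   at least 1 along the multiples of some k, this gives
   E^B(x,eps) <= K E^A(x,eps/2) in R*, and together with the symmetric bound
   the monotone sequence E^I(x,1/(n+1)) is a supremum of both families. *)

Set Implicit Arguments.
Unset Strict Implicit.
Unset Printing Implicit Defensive.

Lemma enc_inj : injective enc.
Proof.
elim=> [|b s IH] [|b' s'] //= [] h.
have eq_b : b = b'.
  have := congr1 odd h; rewrite !oddD !odd_double /=.
  by case: b h; case: b'.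
subst b'; congr (_ :: _); apply: IH.
have : (enc s).*2 = (enc s').*2 by lia.
by move/double_inj.
Qed.

Lemma enc_surj n : exists s, enc s == n.
Proof.
elim: n {-2}n (leqnn n) => [|n IH] m le_mn.
  by exists [::]; rewrite eq_sym -leqn0.
case: m le_mn => [|m] le_mn; first by exists [::].
have le_half : m./2 <= n by lia.
have [s /eqP enc_s] := IH _ le_half.
exists (odd m :: s) => /=; rewrite enc_s.
by rewrite -[X in _ == X.+1](odd_double_half m) addnC.
Qed.

Definition dec n : seq bool := xchoose (enc_surj n).

Lemma decK : cancel dec enc.
Proof. by move=> n; apply/eqP/(xchooseP (enc_surj n)). Qed.

Lemma encK : cancel enc dec.
Proof. by move=> s; apply: enc_inj; rewrite decK. Qed.

Scheme PR_mut_ind := Induction for PR Sort Prop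
with PRs_mut_ind := Induction for PRs Sort Prop.

Lemma eval_det n (e : PR n) v y1 y2 : eval e v y1 -> eval e v y2 -> y1 = y2.
Proof.
move: n e v y1 y2.
apply: (@PR_mut_ind (fun n e => forall v y1 y2, eval e v y1 -> eval e v y2 -> y1 = y2)
    (fun n m gs => forall v w1 w2, evals gs v w1 -> evals gs v w2 -> w1 = w2)).
- by move=> n v y1 y2 H1 H2; dependent destruction H1; dependent destruction H2.
- by move=> v y1 y2 H1 H2; dependent destruction H1; dependent destruction H2.
- by move=> n i v y1 y2 H1 H2; dependent destruction H1; dependent destruction H2.
- move=> n m f IHf gs IHgs v y1 y2 H1 H2.
  dependent destruction H1; dependent destruction H2.
  have ? := IHgs _ _ _ H H0; subst; exact: IHf _ _ _ H1 H2.
- move=> n f IHf g IHg [|k v] y1 y2 H1 H2; first by dependent destruction H1.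
  elim: k v y1 y2 H1 H2 => [|k IHk] v z1 z2 G1 G2;
    dependent destruction G1; dependent destruction G2.
  + exact: IHf _ _ _ G1 G2.
  + have ? := IHk _ _ _ G1_1 G2_1; subst; exact: IHg _ _ _ G1_2 G2_2.
- move=> n f IHf v y1 y2 H1 H2; dependent destruction H1; dependent destruction H2.
  case: (ltngtP k k0) => // lt_k.
  + by have [z [z_gt0 /(IHf _ _ _ H1) z0]] := H0 _ lt_k; subst.
  + by have [z [z_gt0 /(IHf _ _ _ H2) z0]] := H _ lt_k; subst.
- by move=> n v w1 w2 H1 H2; dependent destruction H1; dependent destruction H2.
- move=> n m g IHg gs IHgs v w1 w2 H1 H2.
  dependent destruction H1; dependent destruction H2.
  by rewrite (IHg _ _ _ H H0) (IHgs _ _ _ H1 H2).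
Qed.

Definition computes n (e : PR n) (F : seq nat -> nat) :=
  forall v, size v = n -> eval e v (F v).

Definition computes1 (e : PR 1) (F : nat -> nat) := computes e (fun v => F (nth 0 v 0)).
Definition computes2 (e : PR 2) (F : nat -> nat -> nat) :=
  computes e (fun v => F (nth 0 v 0) (nth 0 v 1)).
Definition computes3 (e : PR 3) (F : nat -> nat -> nat -> nat) :=
  computes e (fun v => F (nth 0 v 0) (nth 0 v 1) (nth 0 v 2)).

Definition proj_pr n i : PR n.+1 := PRproj (inord i).

Lemma computes_proj n i : i <= n -> computes (proj_pr n i) (fun v => nth 0 v i).
Proof.
by move=> le_in v size_v; have := eval_proj (inord i : 'I_n.+1) size_v; rewrite inordK.
Qed.
Arguments computes_proj n i _ [v] _.

Definition comp1 n (f : PR 1) (g : PR n) : PR n := PRcomp f (PRcons g (PRnil n)).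
Definition comp2 n (f : PR 2) (g h : PR n) : PR n :=
  PRcomp f (PRcons g (PRcons h (PRnil n))).
Definition comp3 n (f : PR 3) (g h k : PR n) : PR n :=
  PRcomp f (PRcons g (PRcons h (PRcons k (PRnil n)))).

Section Composition.
Variables (n : nat) (g h k : PR n) (G H K : seq nat -> nat).
Hypotheses (cg : computes g G) (ch : computes h H) (ck : computes k K).

Lemma computes_comp1 f F : computes f F -> computes (comp1 f g) (fun v => F [:: G v]).
Proof.
move=> cf v size_v; apply: eval_comp; last exact: cf.
by apply: evals_cons (cg size_v) _; exact: evals_nil.
Qed.

Lemma computes_comp2 f F :
  computes f F -> computes (comp2 f g h) (fun v => F [:: G v; H v]).
Proof.
move=> cf v size_v; apply: eval_comp; last exact: cf.
apply: evals_cons (cg size_v) _; apply: evals_cons (ch size_v) _.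
exact: evals_nil.
Qed.

Lemma computes_comp3 f F :
  computes f F -> computes (comp3 f g h k) (fun v => F [:: G v; H v; K v]).
Proof.
move=> cf v size_v; apply: eval_comp; last exact: cf.
apply: evals_cons (cg size_v) _; apply: evals_cons (ch size_v) _.
apply: evals_cons (ck size_v) _; exact: evals_nil.
Qed.
End Composition.

Lemma computes_succ : computes1 PRsucc succn.
Proof. by move=> [|x [|]] //= _; exact: eval_succ. Qed.

Fixpoint const_pr n c : PR n :=
  if c is c'.+1 then comp1 PRsucc (const_pr n c') else PRzero n.

Lemma computes_const n c : computes (const_pr n c) (fun _ => c).
Proof.
elim: c => [|c IH] v size_v /=; first exact: eval_zero.
by have := computes_comp1 IH computes_succ size_v.
Qed.

Fixpoint prim_rec (F G : seq nat -> nat) k v :=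
  if k is k'.+1 then G (k' :: prim_rec F G k' v :: v) else F v.

Lemma computes_rec n (f : PR n) (g : PR n.+2) F G : computes f F -> computes g G ->
  computes (PRrec f g) (fun v => prim_rec F G (head 0 v) (behead v)).
Proof.
move=> cf cg [|k v] //= [size_v].
elim: k => [|k IH] /=; first exact/eval_rec0/cf.
by apply: eval_recS IH _; apply: cg => /=; rewrite size_v.
Qed.

(* junk value 0 when [P] has no zero *)
Definition least_zero (P : nat -> nat) : nat :=
  if pselect (exists k, P k == 0) is left h then ex_minn h else 0.

Lemma least_zeroP P : (exists k, P k = 0) ->
  P (least_zero P) = 0 /\ forall j, j < least_zero P -> P j <> 0.
Proof.
move=> [k Pk]; rewrite /least_zero; case: pselect => [h|[]]; last by exists k; apply/eqP.
case: ex_minnP => m /eqP Pm m_min; split => // j lt_jm /eqP Pj.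
by have := m_min _ Pj; rewrite leqNgt lt_jm.
Qed.

Lemma computes_mu n (f : PR n.+1) F : computes f F ->
  (forall v, size v = n -> exists k, F (k :: v) = 0) ->
  computes (PRmu f) (fun v => least_zero (fun k => F (k :: v))).
Proof.
move=> cf F_zero v size_v; have [F0 F_pos] := least_zeroP (F_zero v size_v).
apply: eval_mu; first by rewrite -F0; apply: cf => /=; rewrite size_v.
move=> j lt_j; exists (F (j :: v)); split; last by apply: cf => /=; rewrite size_v.
by rewrite lt0n; apply/eqP; exact: F_pos.
Qed.

Lemma computes_search (e : PR 2) P : computes2 e P ->
  (forall s, exists t, P t s = 0) -> computes1 (PRmu e) (fun s => least_zero (P^~ s)).
Proof.
move=> cP P_ex v size_v; have := computes_mu cP _ size_v.
by case: v size_v => [|s [|]] //= _; apply; move=> [|s' [|]] //= _; exact: P_ex.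
Qed.

Definition add_pr : PR 2 := PRrec (proj_pr 0 0) (comp1 PRsucc (proj_pr 2 1)).

Lemma computes_add : computes2 add_pr addn.
Proof.
move=> v size_v; have := computes_rec (computes_proj 0 0 isT)
  (computes_comp1 (computes_proj 2 1 isT) computes_succ) size_v.
case: v size_v => [|x [|y [|]]] //= _.
suff -> : forall x, prim_rec (nth 0^~ 0) (fun v => (nth 0 v 1).+1) x [:: y] = x + y by [].
by elim=> //= k ->.
Qed.

Definition mul_pr : PR 2 := PRrec (const_pr 1 0) (comp2 add_pr (proj_pr 2 1) (proj_pr 2 2)).

Lemma computes_mul : computes2 mul_pr muln.
Proof.
move=> v size_v; have := computes_rec (@computes_const 1 0)
  (computes_comp2 (computes_proj 2 1 isT) (computes_proj 2 2 isT)
     computes_add) size_v.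
case: v size_v => [|x [|y [|]]] //= _.
suff -> : forall x, prim_rec (fun=> 0) (fun v => nth 0 v 1 + nth 0 v 2) x [:: y] = x * y by [].
by elim=> //= k ->; rewrite mulSn addnC.
Qed.

Definition pred_pr : PR 1 := PRrec (PRzero 0) (proj_pr 1 0).

Lemma computes_pred : computes1 pred_pr predn.
Proof.
move=> v size_v; have := computes_rec (n:=0) (fun w size_w => eval_zero size_w)
  (computes_proj 1 0 isT) size_v.
by case: v size_v => [|[|x] [|]].
Qed.

(* [PRrec] recurses on its first argument, so [x - y] is built as [y] predecessor
   steps applied to [x], with the arguments swapped afterwards. *)
Definition sub_pr : PR 2 :=
  comp2 (PRrec (proj_pr 0 0) (comp1 pred_pr (proj_pr 2 1))) (proj_pr 1 1) (proj_pr 1 0).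

Lemma computes_sub : computes2 sub_pr subn.
Proof.
have csub := computes_rec (computes_proj 0 0 isT)
  (computes_comp1 (computes_proj 2 1 isT) computes_pred).
move=> v size_v; have := computes_comp2 (computes_proj 1 1 isT)
  (computes_proj 1 0 isT) csub size_v.
case: v size_v => [|x [|y [|]]] //= _.
suff -> : forall y, prim_rec (nth 0^~ 0) (fun v => (nth 0 v 1).-1) y [:: x] = x - y by [].
by elim=> [|k IHk] /=; rewrite ?subn0 ?IHk ?subnS.
Qed.

Definition absdiff a b := (a - b) + (b - a).

Lemma absdiff_eq0 a b : (absdiff a b == 0) = (a == b).
Proof. by rewrite /absdiff; apply/eqP/eqP; lia. Qed.

Definition absdiff_pr : PR 2 := comp2 add_pr sub_pr (comp2 sub_pr (proj_pr 1 1) (proj_pr 1 0)).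

Lemma computes_absdiff : computes2 absdiff_pr absdiff.
Proof.
move=> v size_v; have := computes_comp2 computes_sub
  (computes_comp2 (computes_proj 1 1 isT) (computes_proj 1 0 isT)
     computes_sub) computes_add size_v.
by case: v size_v => [|x [|y [|]]].
Qed.

Section MapCode.
Variables (eSz : PR 1) (eNth : PR 2) (eG : PR 1).
Variables (Sz G : nat -> nat) (Nth : nat -> nat -> nat).
Hypothesis cSz : computes1 eSz Sz.
Hypothesis cNth : computes2 eNth Nth.
Hypothesis cG : computes1 eG G.

Definition maps_code k W := Sz k = Sz W /\ forall i, i < Sz W -> Nth k i = G (Nth W i).

Hypothesis maps_code_ex : forall W, exists k, maps_code k W.

Fixpoint entry_mismatch m k W :=
  if m is m'.+1 then entry_mismatch m' k W + absdiff (Nth k m') (G (Nth W m')) else 0.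

Definition mismatch k W := absdiff (Sz k) (Sz W) + entry_mismatch (Sz W) k W.

Lemma entry_mismatch_eq0 m k W :
  entry_mismatch m k W = 0 <-> forall i, i < m -> Nth k i = G (Nth W i).
Proof.
elim: m => [|m IH] /=; first by split.
split.
- move/eqP; rewrite addn_eq0 absdiff_eq0 => /andP[/eqP/IH eq_lt /eqP eq_m] i.
  by rewrite ltnS leq_eqVlt => /orP[/eqP ->|/eq_lt].
- move=> eq_le; apply/eqP; rewrite addn_eq0 absdiff_eq0 eq_le // eqxx andbT.
  by apply/eqP/IH => i lt_im; apply: eq_le; exact: ltnW.
Qed.

Lemma mismatch_eq0 k W : mismatch k W = 0 <-> maps_code k W.
Proof.
rewrite /mismatch /maps_code -entry_mismatch_eq0; split.
- by move/eqP; rewrite addn_eq0 absdiff_eq0 => /andP[/eqP -> /eqP].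
- by move=> [eq_sz eq_entries]; rewrite eq_entries eq_sz /absdiff subnn.
Qed.

(* Lists are only accessible through their codes, so the code of the mapped
   list is found by an unbounded search. *)
Definition map_code W := least_zero (mismatch^~ W).

Lemma map_codeP W : maps_code (map_code W) W.
Proof.
have [k /mismatch_eq0 k0] := maps_code_ex W.
by apply/mismatch_eq0; have [] := @least_zeroP (mismatch^~ W) (ex_intro _ k k0).
Qed.

Definition entry_mismatch_pr : PR 3 :=
  let entry_pr := comp2 absdiff_pr (comp2 eNth (proj_pr 2 1) (proj_pr 2 0))
                    (comp1 eG (comp2 eNth (proj_pr 2 2) (proj_pr 2 0))) in
  PRrec (const_pr 2 0)
    (comp2 add_pr (proj_pr 3 1) (comp3 entry_pr (proj_pr 3 0) (proj_pr 3 2) (proj_pr 3 3))).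

Lemma computes_entry_mismatch : computes3 entry_mismatch_pr entry_mismatch.
Proof.
have c_entry : computes3 (comp2 absdiff_pr (comp2 eNth (proj_pr 2 1) (proj_pr 2 0))
    (comp1 eG (comp2 eNth (proj_pr 2 2) (proj_pr 2 0))))
    (fun i k W => absdiff (Nth k i) (G (Nth W i))).
  move=> v size_v; have := computes_comp2
    (computes_comp2 (computes_proj 2 1 isT) (computes_proj 2 0 isT) cNth)
    (computes_comp1 (computes_comp2 (computes_proj 2 2 isT) (computes_proj 2 0 isT) cNth) cG)
    computes_absdiff size_v.
  by case: v size_v => [|i [|k [|W [|]]]].
move=> v size_v; have := computes_rec (@computes_const 2 0)
  (computes_comp2 (computes_proj 3 1 isT)
    (computes_comp3 (computes_proj 3 0 isT) (computes_proj 3 2 isT) (computes_proj 3 3 isT)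
       c_entry) computes_add) size_v.
case: v size_v => [|m [|k [|W [|]]]] //= _.
suff -> : forall m, prim_rec (fun=> 0) (fun v => nth 0 v 1 +
    absdiff (Nth (nth 0 v 2) (nth 0 v 0)) (G (Nth (nth 0 v 3) (nth 0 v 0)))) m [:: k; W]
  = entry_mismatch m k W by [].
by elim=> //= m' ->.
Qed.

Definition mismatch_pr : PR 2 :=
  comp2 add_pr (comp2 absdiff_pr (comp1 eSz (proj_pr 1 0)) (comp1 eSz (proj_pr 1 1)))
    (comp3 entry_mismatch_pr (comp1 eSz (proj_pr 1 1)) (proj_pr 1 0) (proj_pr 1 1)).

Lemma computes_mismatch : computes2 mismatch_pr mismatch.
Proof.
move=> v size_v; have := computes_comp2
  (computes_comp2 (computes_comp1 (computes_proj 1 0 isT) cSz)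
    (computes_comp1 (computes_proj 1 1 isT) cSz) computes_absdiff)
  (computes_comp3 (computes_comp1 (computes_proj 1 1 isT) cSz)
    (computes_proj 1 0 isT) (computes_proj 1 1 isT) computes_entry_mismatch)
  computes_add size_v.
by case: v size_v => [|k [|W [|]]].
Qed.

Lemma computes_map_code : computes1 (PRmu mismatch_pr) map_code.
Proof.
apply: computes_search computes_mismatch _ => W.
by have [k /mismatch_eq0] := maps_code_ex W; exists k.
Qed.
End MapCode.

Lemma computes_map_Q Q (e : PR 1) G : Q_ok Q -> computes1 e G ->
  exists (eH : PR 1) (H : nat -> nat), computes1 eH H /\
    forall w, Q (dec (H (enc w))) = map (fun s => dec (G (enc s))) (Q w).
Proof.
move=> [[eSz cSz] [[eNth cNth] Q_surj]] cG.
pose Sz n := size (Q (dec n)); pose Nth n i := enc (nth [::] (Q (dec n)) i).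
have cSz' : computes1 eSz Sz.
  by move=> [|a [|]] //= _; rewrite /Sz -{1}(decK a); exact: cSz.
have cNth' : computes2 eNth Nth.
  by move=> [|a [|i [|]]] //= _; rewrite /Nth -{1}(decK a); exact: cNth.
have maps_ex W : exists k, maps_code Sz G Nth k W.
  have [w Qw] := Q_surj (map (fun s => dec (G (enc s))) (Q (dec W))).
  exists (enc w); split; first by rewrite /Sz encK Qw size_map.
  by move=> i lt_i; rewrite /Nth encK Qw (nth_map [::]) // decK.
exists (PRmu (mismatch_pr eSz eNth e)), (map_code Sz G Nth); split.
  exact: computes_map_code cSz' cNth' cG maps_ex.
move=> w; have [eq_size eq_nth] := map_codeP maps_ex (enc w).
move: eq_size eq_nth; rewrite /Sz /Nth !encK => eq_size eq_nth.
apply: (@eq_from_nth _ [::]); first by rewrite size_map.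
move=> i; rewrite eq_size => lt_i; rewrite (nth_map [::]) //.
by apply: enc_inj; rewrite decK eq_nth.
Qed.

Lemma partial_rec_omap f (e : PR 1) h :
  partial_rec f -> computes1 e h ->
  partial_rec (fun p => omap (fun w => dec (h (enc w))) (f p)).
Proof.
move=> [ef ef_spec] ce; exists (comp1 e ef) => p y; split.
- rewrite /comp1 => ev; dependent destruction ev.
  match goal with E : evals _ _ _ |- _ => rename E into ev_args end.
  dependent destruction ev_args.
  match goal with E : evals (PRnil _) _ _ |- _ => dependent destruction E end.
  have [s [f_p y0E]] := (ef_spec p y0).1 H; subst y0.
  by exists (dec (h (enc s))); rewrite f_p decK (eval_det ev (ce [:: enc s] erefl)).
- move=> [s []]; case f_p : (f p) => [w|] //= [<-] ->.
  rewrite decK; apply: (@eval_comp _ _ _ _ _ [:: enc w]); last exact: ce.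
  by apply: evals_cons; [apply/ef_spec; exists w | exact: evals_nil].
Qed.

Lemma partial_rec_const w : partial_rec (fun _ => Some w).
Proof.
exists (const_pr 1 (enc w)) => p y; split.
- by move=> ev; exists w; rewrite (eval_det ev (@computes_const 1 (enc w) [:: enc p] erefl)).
- by move=> [s [[<-] ->]]; exact: (@computes_const 1 (enc w) [:: enc p] erefl).
Qed.

Local Open Scope ring_scope.

Definition close_test k (b c : nat) := ((b * 2 ^ k).+1 - 2 * c.+1)%N.

Section Approximation.
Variable R : realType.

Lemma ratr_signed_frac a b c :
  ratr ((-1) ^+ a * b%:R / c.+1%:R : rat) = (-1) ^+ a * b%:R / c.+1%:R :> R.
Proof. by rewrite fmorph_div rmorphM rmorphXn rmorphN1 !rmorph_nat. Qed.

Lemma norm_signed_frac a b c : `|(-1) ^+ a * b%:R / c.+1%:R : R| = b%:R / c.+1%:R.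
Proof. by rewrite -mulrA normrM normr_sign mul1r normrM normfV !normr_nat. Qed.

Lemma close_test_eq0 k b c :
  (close_test k b c == 0)%N = ((b%:R : R) / c.+1%:R < 2%:R * 2%:R ^- k).
Proof.
rewrite subn_eq0 ltr_pdivrMr ?ltr0Sn // -(ltr_nat R) !natrM natrX.
by rewrite mulrAC ltr_pdivlMr // exprn_gt0.
Qed.

Section Test.
Variables (dd : R) (a b c k : nat).
Hypothesis approx : `|dd - (-1) ^+ a * b%:R / c.+1%:R| <= 2%:R ^- k.

Lemma close_test_sound : close_test k b c = 0%N -> dd < 3%:R * 2%:R ^- k.
Proof.
move/eqP; rewrite close_test_eq0 -(norm_signed_frac a) => frac_lt.
have := le_trans (ler_norm _) approx; have := ler_norm ((-1) ^+ a * b%:R / c.+1%:R : R).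
move: frac_lt; move: (2%:R ^- k) ((-1) ^+ a * _ / _) `|_| => e r nr; lra.
Qed.

Lemma close_test_complete : 0 <= dd -> dd < 2%:R ^- k -> close_test k b c = 0%N.
Proof.
move=> dd_ge0 dd_lt; apply/eqP; rewrite close_test_eq0 -(norm_signed_frac a).
set r := (-1) ^+ a * _ / _.
have r_le : `|r| <= dd + `|dd - r|.
  rewrite -[X in X + _](ger0_norm dd_ge0) {1}(_ : r = dd - (dd - r)); last by ring.
  exact: ler_normB.
by apply: (le_lt_trans r_le); rewrite mulr_natl mulr2n ltr_leD.
Qed.
End Test.

Lemma exists_pow2_lt (c eps : R) : 0 <= c -> 0 < eps -> exists k : nat, c * 2%:R ^- k < eps.
Proof.
move=> c_ge0 eps_gt0.
have := archi_boundP (divr_ge0 c_ge0 (ltW eps_gt0)).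
set k := Num.Def.archi_bound _ => ck.
have pow_gt0 : (0 : R) < 2%:R ^+ k by rewrite exprn_gt0.
exists k; rewrite ltr_pdivrMr // mulrC -ltr_pdivrMr //.
by apply: (lt_trans ck); rewrite -natrX ltr_nat ltn_expl.
Qed.

Lemma exists_inv_nat_le (e : R) M : 0 < e -> exists n, (M < n)%N /\ n.+1%:R^-1 <= e.
Proof.
move=> e_gt0; have : 0 <= e^-1 by rewrite invr_ge0 ltW.
move/archi_boundP.
set a := Num.Def.archi_bound _ => lt_a.
exists (maxn M.+1 a); split; first by rewrite leq_max leqnn.
rewrite -[e]invrK lef_pV2 ?posrE ?invr_gt0 ?ltr0n //.
by apply/ltW/(lt_le_trans lt_a); rewrite ler_nat leqW // leq_maxr.
Qed.
End Approximation.

Lemma total_rec_rat3_computes D : total_rec_rat3 D ->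
  exists (en ed : PR 3) (Bn Cn : nat -> nat -> nat -> nat),
  [/\ computes3 en Bn,
      computes3 ed Cn &
   forall s1 s2 n, exists a, D s1 s2 n =
     (-1) ^+ a * (Bn (enc s1) (enc s2) n)%:R / (Cn (enc s1) (enc s2) n).+1%:R].
Proof.
have total_fun (e : PR 3) : (forall s1 s2 n, exists b, eval e [:: enc s1; enc s2; n] b) ->
    exists F, computes3 e F.
  move=> e_total; have {}e_total x y z : exists b, eval e [:: x; y; z] b.
    by have [b] := e_total (dec x) (dec y) z; rewrite !decK; exists b.
  exists (fun x y z => sval (cid (e_total x y z))).
  by move=> [|x [|y [|z [|]]]] //= _; exact: svalP (cid (e_total x y z)).
move=> [es [en [ed D_spec]]].
have [Bn cB] : exists Bn, computes3 en Bn.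
  by apply: total_fun => s1 s2 n; have [? [b [? []]]] := D_spec s1 s2 n; exists b.
have [Cn cC] : exists Cn, computes3 ed Cn.
  by apply: total_fun => s1 s2 n; have [? [? [c []]]] := D_spec s1 s2 n; exists c.
exists en, ed, Bn, Cn; split => // s1 s2 n.
have [a [b [c [_ ev_b ev_c ->]]]] := D_spec s1 s2 n; exists a.
by rewrite (eval_det ev_b (cB [:: enc s1; enc s2; n] erefl))
  (eval_det ev_c (cC [:: _; _; _] erefl)).
Qed.

Definition close_test_pr k (en ed : PR 3) : PR 2 :=
  let at_k (e : PR 3) := comp3 e (proj_pr 1 0) (proj_pr 1 1) (const_pr 2 k) in
  comp2 sub_pr (comp1 PRsucc (comp2 mul_pr (at_k en) (const_pr 2 (2 ^ k))))
               (comp2 mul_pr (const_pr 2 2) (comp1 PRsucc (at_k ed))).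

Lemma computes_close_test k (en ed : PR 3) Bn Cn : computes3 en Bn -> computes3 ed Cn ->
  computes2 (close_test_pr k en ed) (fun t s => close_test k (Bn t s k) (Cn t s k)).
Proof.
move=> cB cC v size_v.
have c_at_k Fn (e : PR 3) : computes3 e Fn ->
    computes2 (comp3 e (proj_pr 1 0) (proj_pr 1 1) (const_pr 2 k)) (fun t s => Fn t s k).
  move=> cF w size_w; have := computes_comp3 (computes_proj 1 0 isT)
    (computes_proj 1 1 isT) (@computes_const 2 k) cF size_w.
  by case: w size_w => [|? [|? [|]]].
have := computes_comp2
  (computes_comp1 (computes_comp2 (c_at_k _ _ cB) (@computes_const 2 (2 ^ k)) computes_mul)
     computes_succ)
  (computes_comp2 (@computes_const 2 2) (computes_comp1 (c_at_k _ _ cC) computes_succ)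
     computes_mul) computes_sub size_v.
by case: v size_v => [|t [|s [|]]].
Qed.

Section Translation.
Variables (R : realType) (X : Type) (d : X -> X -> R).
Hypothesis d_metric : metric d.

Lemma metric_ge0 x y : 0 <= d x y. Proof. by case: d_metric. Qed.
Lemma metric_sym x y : d x y = d y x. Proof. by case: d_metric. Qed.
Lemma metric_triangle x y z : d x z <= d x y + d y z. Proof. by case: d_metric. Qed.

(* The distance being only approximable, closeness can only be decided with
   a factor 3 of slack between the two directions. *)
Lemma equiv_interp_close_test (P1 P2 : seq bool -> X) k : equiv_interp d P1 P2 ->
  exists (e : PR 2) (test : nat -> nat -> nat),
  [/\ computes2 e test,
      forall t s, test t s = 0%N -> d (P1 (dec t)) (P2 (dec s)) < 3%:R * 2%:R ^- k &
      forall t s, d (P1 t) (P2 s) < 2%:R ^- k -> test (enc t) (enc s) = 0%N].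
Proof.
move=> [D [/total_rec_rat3_computes [en [ed [Bn [Cn [cB cC D_eq]]]]] D_approx]].
exists (close_test_pr k en ed), (fun t s => close_test k (Bn t s k) (Cn t s k)); split.
- exact: computes_close_test.
- move=> t s; have [a] := D_eq (dec t) (dec s) k; rewrite !decK => Da.
  by have := D_approx (dec t) (dec s) k; rewrite Da ratr_signed_frac; exact: close_test_sound.
- move=> t s; have [a Da] := D_eq t s k.
  have := D_approx t s k; rewrite Da ratr_signed_frac => approx.
  exact: close_test_complete approx (metric_ge0 _ _).
Qed.

Lemma computable_translation (I0 A B : seq bool -> X) (delta : R) :
  dense_image d I0 -> dense_image d B -> equiv_interp d I0 A -> equiv_interp d I0 B ->
  0 < delta -> exists (e : PR 1) (G : nat -> nat), computes1 e G /\
    forall s, d (A s) (B (dec (G (enc s)))) < delta.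
Proof.
move=> dense_I0 dense_B eqvA eqvB delta_gt0.
have [k small_k] := exists_pow2_lt (ler0n R 6) delta_gt0.
have [eA [testA [cA soundA completeA]]] := equiv_interp_close_test k eqvA.
have [eB [testB [cB soundB completeB]]] := equiv_interp_close_test k eqvB.
have pow_gt0 : (0 : R) < 2%:R ^- k by rewrite invr_gt0 exprn_gt0.
have testA_ex s : exists t, testA t s = 0%N.
  have [t close_t] := dense_I0 (A (dec s)) _ pow_gt0.
  by exists (enc t); rewrite -[s]decK; apply: completeA.
have testB_ex t : exists s, testB t s = 0%N.
  have [s close_s] := dense_B (I0 (dec t)) _ pow_gt0.
  by exists (enc s); rewrite -[t]decK; apply: completeB; rewrite metric_sym.
have cB' : computes2 (comp2 eB (proj_pr 1 1) (proj_pr 1 0))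
    (fun s t => testB t s).
  move=> v size_v; have := computes_comp2 (computes_proj 1 1 isT)
    (computes_proj 1 0 isT) cB size_v.
  by case: v size_v => [|? [|? [|]]].
pose near_I0 s := least_zero (testA^~ s); pose near_B t := least_zero (testB t).
exists (comp1 (PRmu (comp2 eB (proj_pr 1 1) (proj_pr 1 0))) (PRmu eA)).
exists (fun s => near_B (near_I0 s)); split.
  by have := computes_comp1 (computes_search cA testA_ex)
    (@computes_search _ (fun s t => testB t s) cB' testB_ex).
move=> s; have [/soundA closeA _] := least_zeroP (testA_ex (enc s)).
have [/soundB closeB _] := least_zeroP (testB_ex (near_I0 (enc s))).
rewrite encK metric_sym in closeA.
have := metric_triangle (A s) (I0 (dec (near_I0 (enc s)))) (B (dec (near_B (near_I0 (enc s))))).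
move: closeA closeB small_k; rewrite -/(near_I0 _) -/(near_B _).
move: (2%:R ^- k) (d _ _) (d _ _) (d _ _) => r dA dB dAB; lra.
Qed.
End Translation.

Section OrbitComplexity.
Variables (R : realType) (X : Type) (d : X -> X -> R) (T : X -> X).
Variables (U : seq bool -> option (seq bool)) (Q : seq bool -> seq (seq bool)).
Hypotheses (d_metric : metric d) (U_univ : universal U) (Q_ok_Q : Q_ok Q).

Lemma good_prog_translate (A B : seq bool -> X) (e : PR 1) G (delta eps : R) :
  computes1 e G ->
  (forall s, d (A s) (B (dec (G (enc s)))) < delta) ->
  exists c, forall x n p, good_prog d T U Q A x n eps p ->
    exists p', good_prog d T U Q B x n (delta + eps) p' /\ (size p' <= size p + c)%N.
Proof.
move=> cG close_G.
have [eH [H [cH QH]]] := computes_map_Q Q_ok_Q cG.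
pose f p := omap (fun w => dec (H (enc w))) (U p).
have [c c_spec] := U_univ.2 f (partial_rec_omap U_univ.1 cH).
exists c => x n p [w [U_p [size_w close_w]]].
have f_p : f p = Some (dec (H (enc w))) by rewrite /f U_p.
have [p' [U_p' size_p']] := c_spec p _ f_p.
exists p'; split => //; exists (dec (H (enc w))); rewrite QH size_map.
split=> //; split=> // i le_in; rewrite (nth_map [::]) ?size_w //.
apply: le_lt_trans (metric_triangle d_metric _ (A (nth [::] (Q w) i)) _) _.
by rewrite (metric_sym d_metric (B _)) ltrD ?close_G ?close_w.
Qed.

Lemma good_prog_exists (I : seq bool -> X) x n eps :
  dense_image d I -> 0 < eps -> exists p, good_prog d T U Q I x n eps p.
Proof.
move=> dense_I eps_gt0.
pose g i := sval (cid (dense_I (iter i T x) eps eps_gt0)).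
have close_g i : d (I (g i)) (iter i T x) < eps.
  exact: svalP (cid (dense_I (iter i T x) eps eps_gt0)).
have [w Qw] := Q_ok_Q.2.2 (mkseq g n.+1).
have [c c_spec] := U_univ.2 _ (partial_rec_const w).
have [p [U_p _]] := c_spec [::] w erefl.
exists p, w; rewrite Qw size_mkseq; split=> //; split=> // i le_in.
by rewrite nth_mkseq.
Qed.

Lemma good_prog_le (I : seq bool -> X) x n e1 e2 p : e1 <= e2 ->
  good_prog d T U Q I x n e1 p -> good_prog d T U Q I x n e2 p.
Proof.
move=> le_e [w [U_p [size_w close_w]]]; exists w; split=> //; split=> // i le_in.
exact: lt_le_trans (close_w i le_in) le_e.
Qed.

Section Enet.
Variables (I : seq bool -> X) (x : X).

Lemma Enet_good n eps : (exists p, good_prog d T U Q I x n eps p) ->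
  exists p, size p = Enet d T U Q I x n eps /\ good_prog d T U Q I x n eps p.
Proof.
move=> [p good_p]; rewrite /Enet; case: pselect => [ex_m|[]]; last first.
  by exists (size p); apply/asboolP; exists p.
by case: ex_minnP => m /asboolP.
Qed.

Lemma Enet_min n eps p :
  good_prog d T U Q I x n eps p -> (Enet d T U Q I x n eps <= size p)%N.
Proof.
move=> good_p; rewrite /Enet; case: pselect => [ex_m|[]]; last first.
  by exists (size p); apply/asboolP; exists p.
by case: ex_minnP => m _; apply; apply/asboolP; exists p.
Qed.

Hypothesis dense_I : dense_image d I.

Lemma Enet_antimono n e1 e2 : 0 < e1 -> e1 <= e2 ->
  (Enet d T U Q I x n e2 <= Enet d T U Q I x n e1)%N.
Proof.
move=> e1_gt0 le_e.
have [p [<- good_p]] := Enet_good (good_prog_exists x n dense_I e1_gt0).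
exact/Enet_min/(good_prog_le le_e).
Qed.

Lemma Enet_eq0 n eps : 0 < eps -> Enet d T U Q I x n eps = 0%N ->
  exists w, U [::] = Some w /\ size (Q w) = n.+1.
Proof.
move=> eps_gt0 E0.
have [p [size_p [w [U_w [size_w _]]]]] := Enet_good (good_prog_exists x n dense_I eps_gt0).
by move: size_p U_w; rewrite E0 => /size0nil ->; exists w.
Qed.

(* Complexity 0 means that the empty program works, which fixes the length of
   the orbit segment; so it happens for at most one length. *)
Lemma Enet_mul_gt0 eps : 0 < eps ->
  exists k, (0 < k)%N /\ forall n, (0 < n)%N -> (0 < Enet d T U Q I x (k * n) eps)%N.
Proof.
move=> eps_gt0.
case: (pselect (exists m, Enet d T U Q I x m eps = 0%N)) => [[m E0]|no_zero]; last first.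
  by exists 1%N; split=> // n _; rewrite lt0n; apply/eqP => E0; apply: no_zero; exists (1 * n)%N.
exists m.+1; split=> // n n_gt0; rewrite lt0n.
apply/eqP => /(Enet_eq0 eps_gt0) [w [U_w size_w]].
have [w' [U_w' size_w']] := Enet_eq0 eps_gt0 E0.
move: U_w'; rewrite U_w => -[eq_w]; subst w'.
by move: size_w'; rewrite size_w => -[]; nia.
Qed.
End Enet.

Lemma Enet_translate (A B : seq bool -> X) (e : PR 1) G (delta eps : R) :
  dense_image d A -> 0 < eps -> computes1 e G ->
  (forall s, d (A s) (B (dec (G (enc s)))) < delta) ->
  exists c, forall x n, (Enet d T U Q B x n (delta + eps) <= Enet d T U Q A x n eps + c)%N.
Proof.
move=> dense_A eps_gt0 cG close_G.
have [c c_spec] := good_prog_translate eps cG close_G.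
exists c => x n.
have [p [<- good_p]] := Enet_good (good_prog_exists x n dense_A eps_gt0).
have [p' [good_p' size_p']] := c_spec x n p good_p.
exact: leq_trans (Enet_min good_p') size_p'.
Qed.
End OrbitComplexity.

Section ClassOrder.
Variable Rs : realFieldType.
Implicit Types a b c x y : Rs.

Lemma sim_refl a : a != 0 -> sim a a.
Proof. by move=> a_neq0; split=> //; exists 2%N; rewrite divff // normr1 ltr1n. Qed.

Lemma sim_natmul_bound x a : 0 < x -> 0 < a -> sim x a ->
  exists N1 N2 : nat, x < N1%:R * a /\ a < N2%:R * x.
Proof.
move=> x_gt0 a_gt0 [_ _ [N1 lt_xa] [N2 lt_ax]]; exists N1, N2.
move: lt_xa lt_ax; rewrite !ger0_norm ?divr_ge0 ?ltW //.
by rewrite !ltr_pdivrMr.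
Qed.

Lemma cls_ltP a b : 0 < a -> 0 < b -> cls_lt a b <-> forall N : nat, N%:R * a <= b.
Proof.
move=> a_gt0 b_gt0; have [a_neq0 b_neq0] := (lt0r_neq0 a_gt0, lt0r_neq0 b_gt0).
have norm_div x y : 0 < x -> 0 < y -> `|x / y| = x / y.
  by move=> x_gt0 y_gt0; rewrite ger0_norm // divr_ge0 // ltW.
split.
- move=> [le_ab not_sim] N.
  case: (le_ab a b a_gt0 b_gt0 (sim_refl a_neq0) (sim_refl b_neq0)) => [//|lt_ab].
  rewrite leNgt; apply/negP => lt_b; apply: not_sim; split=> //.
    by exists 1%N; rewrite norm_div // ltr_pdivrMr //; lra.
  by exists N; rewrite norm_div // ltr_pdivrMr //; lra.
- move=> natmul_le; split.
  + move=> x y x_gt0 y_gt0 sim_xa sim_yb; right.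
    have [N1 [_ [lt_xa _]]] := sim_natmul_bound x_gt0 a_gt0 sim_xa.
    have [_ [N2 [_ lt_by]]] := sim_natmul_bound y_gt0 b_gt0 sim_yb.
    have := natmul_le (N1 * N2)%N; rewrite natrM.
    have [N1_ge0 N2_ge0] : (0 : Rs) <= N1%:R /\ (0 : Rs) <= N2%:R by [].
    nra.
  + move=> [_ _ _ [N]]; rewrite norm_div // ltr_pdivrMr // mulrC.
    by have := natmul_le N; lra.
Qed.

Lemma cls_lt_irrefl a : 0 < a -> ~ cls_lt a a.
Proof. by move=> a_gt0 /(cls_ltP a_gt0 a_gt0)/(_ 2%N); lra. Qed.

Lemma cls_lt_asym a b : 0 < a -> 0 < b -> cls_lt a b -> ~ cls_lt b a.
Proof.
move=> a_gt0 b_gt0 /(cls_ltP a_gt0 b_gt0)/(_ 2%N) + /(cls_ltP b_gt0 a_gt0)/(_ 2%N).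
lra.
Qed.

Lemma cls_lt_le_natmul a b c (K : nat) : 0 < a -> 0 < b -> 0 < c ->
  cls_lt a b -> b <= K%:R * c -> cls_lt a c.
Proof.
move=> a_gt0 b_gt0 c_gt0 /(cls_ltP a_gt0 b_gt0) natmul_le le_b.
have K_gt0 : (0 : Rs) < K%:R by rewrite -(pmulr_lgt0 _ c_gt0); apply: lt_le_trans le_b.
apply/(cls_ltP a_gt0 c_gt0) => N; rewrite -(ler_pM2l K_gt0) mulrA -natrM mulnC.
exact: le_trans (natmul_le (N * K)%N) le_b.
Qed.

Lemma cls_le_of_le a b : 0 < a -> a <= b -> cls_le a b.
Proof.
move=> a_gt0 le_ab x y x_gt0 y_gt0 sim_xa sim_yb.
have b_gt0 := lt_le_trans a_gt0 le_ab.
have [N1 [_ [lt_xa _]]] := sim_natmul_bound x_gt0 a_gt0 sim_xa.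
have [_ [N2 [_ lt_by]]] := sim_natmul_bound y_gt0 b_gt0 sim_yb.
case: (ltP x y) => [|le_yx]; [by right | left].
split; rewrite ?gt_eqF //; rewrite /bounded !ger0_norm ?divr_ge0 ?ltW //.
  exists (N1 * N2)%N; rewrite ltr_pdivrMr // natrM.
  have [N1_ge0 N2_ge0] : (0 : Rs) <= N1%:R /\ (0 : Rs) <= N2%:R by [].
  nra.
by exists 2%N; rewrite ltr_pdivrMr //; lra.
Qed.

Lemma calR_le_of_nlt (s t : nat -> Rs) : ~ seq_lt t s -> calR_le s t.
Proof. by move=> not_lt_ts; case: (pselect (seq_lt s t)); [left | right]. Qed.

Lemma calR_le_nlt (s t : nat -> Rs) : (forall n, 0 < s n) -> (forall n, 0 < t n) ->
  calR_le s t -> ~ seq_lt t s.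
Proof.
move=> s_gt0 t_gt0 [[M1 lt_st] [M2 lt_ts] | [_ not_lt_ts] //].
pose n := (maxn M1 M2).+1.
have [lt_M1 lt_M2] : (M1 < n)%N /\ (M2 < n)%N by rewrite !ltnS leq_maxl leq_maxr.
exact: cls_lt_asym (s_gt0 n) (t_gt0 n) (lt_st n n lt_M1 lt_M1) (lt_ts n n lt_M2 lt_M2).
Qed.

Lemma is_sup_calR_cst (R : realType) (F : R -> Rs) (s : nat -> Rs) :
  (forall eps, 0 < eps -> 0 < F eps) -> mono_seq s ->
  (forall eps, 0 < eps -> forall M, exists n (K : nat), (M < n)%N /\ F eps <= K%:R * s n) ->
  (forall M, exists m eps (K : nat), [/\ (M < m)%N, 0 < eps & s m <= K%:R * F eps]) ->
  is_sup_calR (fun eps => 0 < eps) (fun eps _ => F eps) s.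
Proof.
move=> F_gt0 [s_gt0 s_mono] F_le s_le; split=> //.
- move=> eps eps_gt0; apply: calR_le_of_nlt => -[M lt_s].
  have [n [K [lt_Mn le_F]]] := F_le eps eps_gt0 M.
  apply: cls_lt_irrefl (s_gt0 n) _.
  exact: cls_lt_le_natmul (s_gt0 n) (F_gt0 _ eps_gt0) (s_gt0 n) (lt_s n M.+1 lt_Mn _) le_F.
- move=> t [t_gt0 _] t_ub; apply: calR_le_of_nlt => -[M lt_ts].
  have [m [eps [K [lt_Mm eps_gt0 le_s]]]] := s_le M.
  apply: (calR_le_nlt (fun=> F_gt0 _ eps_gt0) t_gt0 (t_ub eps eps_gt0)).
  exists M => n m' lt_Mn _.
  exact: cls_lt_le_natmul (t_gt0 n) (s_gt0 m) (F_gt0 _ eps_gt0) (lt_ts n m lt_Mn lt_Mm) le_s.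
Qed.
End ClassOrder.

Section Hyperreals.
Variables (R : realType) (Rs : realFieldType) (iota : {rmorphism R -> Rs}).
Variable J : (nat -> R) -> Rs.
Hypothesis J_hyper : hyperreals iota J.

Lemma J_add f g : J (fun n => f n + g n) = J f + J g.
Proof. by case: J_hyper => _ []. Qed.

Lemma J_ge (a : R) f : (exists k, (0 < k)%N /\ forall n, (0 < n)%N -> a <= f (k * n)%N) ->
  iota a <= J f.
Proof. by case: J_hyper => _ [] _ _ _ _; apply. Qed.

Lemma J_sub f g : J (fun n => f n - g n) = J f - J g.
Proof.
apply: (addrI (J g)); rewrite -J_add addrC subrK.
by congr J; apply: funext => n; rewrite addrC subrK.
Qed.

Lemma J_le f g : (forall n, f n <= g n) -> J f <= J g.
Proof.
move=> le_fg; rewrite -subr_ge0 -J_sub -(rmorph0 iota); apply: J_ge.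
by exists 1%N; split=> // n _; rewrite subr_ge0.
Qed.

Lemma J_nat c : J (fun _ => c%:R) = c%:R.
Proof.
elim: c => [|c IH].
  change (J (fun _ => 0) = 0); rewrite -(subrr (J (fun _ => 0))) -J_sub.
  by congr J; apply: funext => n; rewrite subrr.
have -> : (fun _ : nat => c.+1%:R : R) = (fun n => c%:R + 1) by apply: funext => n; rewrite natr1.
by rewrite (J_add (fun _ => c%:R) (fun _ => 1)) IH; case: J_hyper => _ [_ _ -> _ _]; rewrite natr1.
Qed.
End Hyperreals.

Section OrbitComplexityClass.
Variables (R : realType) (X : Type) (d : X -> X -> R) (T : X -> X).
Variables (U : seq bool -> option (seq bool)) (Q : seq bool -> seq (seq bool)).
Variables (Rs : realFieldType) (iota : {rmorphism R -> Rs}) (J : (nat -> R) -> Rs).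
Hypotheses (d_metric : metric d) (U_univ : universal U) (Q_ok_Q : Q_ok Q).
Hypothesis J_hyper : hyperreals iota J.
Variable x : X.

Definition Ehyp (I : seq bool -> X) eps := J (fun n => (Enet d T U Q I x n eps)%:R).

Lemma Ehyp_ge1 I eps : dense_image d I -> 0 < eps -> 1 <= Ehyp I eps.
Proof.
move=> dense_I eps_gt0; rewrite -(rmorph1 iota); apply: J_ge => //.
have [k [k_gt0 Enet_gt0]] := Enet_mul_gt0 T U_univ Q_ok_Q x dense_I eps_gt0.
by exists k; split=> // n n_gt0; rewrite ler1n Enet_gt0.
Qed.

Lemma Ehyp_antimono I e1 e2 : dense_image d I -> 0 < e1 -> e1 <= e2 ->
  Ehyp I e2 <= Ehyp I e1.
Proof.
move=> dense_I e1_gt0 le_e; apply: (J_le J_hyper) => n.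
by rewrite ler_nat (Enet_antimono T U_univ Q_ok_Q x dense_I n e1_gt0 le_e).
Qed.

Lemma Ehyp_translate (A B : seq bool -> X) (e : PR 1) G (delta eps : R) :
  dense_image d A -> 0 < eps -> computes1 e G ->
  (forall s, d (A s) (B (dec (G (enc s)))) < delta) ->
  exists K : nat, Ehyp B (delta + eps) <= K%:R * Ehyp A eps.
Proof.
move=> dense_A eps_gt0 cG close_G.
have [c Enet_le] := Enet_translate T d_metric U_univ Q_ok_Q dense_A eps_gt0 cG close_G.
have E_ge1 := Ehyp_ge1 dense_A eps_gt0.
exists c.+1; apply: (@le_trans _ _ (Ehyp A eps + c%:R)).
  rewrite /Ehyp -(J_nat J_hyper) -(J_add J_hyper); apply: (J_le J_hyper) => n.
  by rewrite -natrD ler_nat Enet_le.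
rewrite -natr1 mulrDl mul1r addrC lerD2r.
by rewrite -[X in X <= _]mulr1 ler_wpM2l.
Qed.

Lemma Ehyp_equiv_le (I0 A B : seq bool -> X) eps :
  dense_image d I0 -> dense_image d A -> dense_image d B ->
  equiv_interp d I0 A -> equiv_interp d I0 B -> 0 < eps ->
  exists K : nat, Ehyp B eps <= K%:R * Ehyp A (eps / 2).
Proof.
move=> dense_I0 dense_A dense_B eqv_A eqv_B eps_gt0.
have eps2_gt0 : 0 < eps / 2 by rewrite divr_gt0.
have [e [G [cG close_G]]] :=
  computable_translation d_metric dense_I0 dense_B eqv_A eqv_B eps2_gt0.
by have := Ehyp_translate dense_A eps2_gt0 cG close_G; rewrite -splitr.
Qed.

Lemma Ehyp_is_sup (A B : seq bool -> X) : dense_image d A -> dense_image d B ->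
  (forall eps, 0 < eps -> exists K : nat, Ehyp B eps <= K%:R * Ehyp A (eps / 2)) ->
  (forall eps, 0 < eps -> exists K : nat, Ehyp A eps <= K%:R * Ehyp B (eps / 2)) ->
  is_sup_calR (fun eps => 0 < eps) (fun eps _ => Ehyp B eps) (fun n => Ehyp A n.+1%:R^-1).
Proof.
move=> dense_A dense_B B_le A_le.
have inv_gt0 n : (0 : R) < n.+1%:R^-1 by rewrite invr_gt0 ltr0n.
have E_gt0 I eps : dense_image d I -> 0 < eps -> 0 < Ehyp I eps.
  by move=> dense_I eps_gt0; apply: lt_le_trans ltr01 (Ehyp_ge1 dense_I eps_gt0).
apply: is_sup_calR_cst => [eps /(E_gt0 _ _ dense_B)//| | eps eps_gt0 M | M].
- split=> [n|]; first exact: E_gt0.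
  left=> n; apply: cls_le_of_le (E_gt0 _ _ dense_A (inv_gt0 _)) _.
  by apply: Ehyp_antimono => //; rewrite lef_pV2 ?posrE ?ltr0n // ler_nat.
- have [K le_B] := B_le eps eps_gt0.
  have [n [lt_Mn le_inv]] := exists_inv_nat_le M (divr_gt0 eps_gt0 (ltr0n R 2)).
  exists n, K; split=> //; apply: le_trans le_B _.
  by rewrite ler_wpM2l // Ehyp_antimono.
- have [K le_A] := A_le _ (inv_gt0 M.+1).
  by exists M.+1, (M.+2%:R^-1 / 2), K; split; rewrite // divr_gt0.
Qed.
End OrbitComplexityClass.

Theorem lemma29 (R : realType) (X : Type) (d : X -> X -> R) (T : X -> X)
  (U : seq bool -> option (seq bool)) (Q : seq bool -> seq (seq bool))
  (Rs : realFieldType) (iota : {rmorphism R -> Rs}) (J : (nat -> R) -> Rs)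
  (CS : (seq bool -> X) -> Prop) (I J' : seq bool -> X) :
  metric d -> separable d -> universal U -> Q_ok Q -> hyperreals iota J ->
  computable_structure d CS -> CS I -> CS J' ->
  forall x : X, exists s : nat -> Rs,
    is_sup_calR (fun eps => 0 < eps) (Ecls J d T U Q I x) s /\
    is_sup_calR (fun eps => 0 < eps) (Ecls J d T U Q J' x) s.
Proof.
move=> d_metric _ U_univ Q_ok_Q J_hyper [I0 [[dense_I0 _] CS_spec]] CS_I CS_J' x.
have [[dense_I _] eqv_I] := (CS_spec I).1 CS_I.
have [[dense_J' _] eqv_J'] := (CS_spec J').1 CS_J'.
exists (fun n => Ehyp d T U Q J x I n.+1%:R^-1).
by split; apply: (Ehyp_is_sup (x := x) U_univ Q_ok_Q J_hyper) => // eps;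
  apply: (Ehyp_equiv_le T d_metric U_univ Q_ok_Q J_hyper x dense_I0).
Qed.
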